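(* Let $(\mathcal{G}(u_0,v_0),-\Omega^2\,du\,dv)$ with radial function $r$ and stress-energy components $T_{uu},T_{uv},T_{vv}$ be as described in the context, satisfying assumptions (I)–(VII), and suppose there is $\delta>0$ such that, with $\mathcal{W}=\mathcal{W}(\delta)$, condition (A), $T_{uv}\Omega^{-2}<\frac1{4r^2}$, holds on $\mathcal{A}\cap\mathcal{W}$. If $\mathcal{A}\cap\mathcal{W}\neq\emptyset$, then $\mathcal{A}\cap\mathcal{W}$ is connected and terminates (i.e. its future limit point in $\overline{K}(u_0,v_0)$ lies) either at $i^+=(0,\infty)$, in which case it is asymptotic to the event horizon, or on the Cauchy horizon $(0,u_0]\times\{\infty\}\subset\overline{K}(u_0,v_0)$. In the latter case, $\mathcal{W}\cap\mathcal{R}$ contains a rectangle $K(u_1,v_1)=[0,u_1]\times[v_1,\infty)$ for some $u_1\in(0,u_0]$, $v_1\in[v_0,\infty)$.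
   Context: Fix double null coordinates $(u,v)$ on $\mathbb{R}^2$ with Minkowski metric $-du\,dv$, time-oriented so that $u,v$ increase toward the future. For $u,v>0$, $K(u,v)=[0,u]\times[v,\infty)$; $\overline{K}(u_0,v_0)=[0,u_0]\times[v_0,\infty]$. Fix $u_0,v_0>0$, $\mathcal{C}_{in}=[0,u_0]\times\{v_0\}$, $\mathcal{C}_{out}=\{0\}\times[v_0,\infty)$ (the event horizon); causal notions refer to $K(u_0,v_0)$. Let $\mathcal{G}(u_0,v_0)\subset K(u_0,v_0)$ be globally hyperbolic, relatively open, containing $\mathcal{C}_{in}\cup\mathcal{C}_{out}$, with metric $-\Omega^2du\,dv$ ($\Omega>0$ smooth), smooth $r\ge0$ with $r>0$ on $\mathcal{C}_{in}\cup\mathcal{C}_{out}$, and smooth $T_{uu},T_{uv},T_{vv}$ (stress-energy components of the spherically symmetric spacetime $-\Omega^2du\,dv+r^2g_{S^2}$) satisfying $\partial_u(\Omega^{-2}\partial_u r)=-r\Omega^{-2}T_{uu}$, $\partial_v(\Omega^{-2}\partial_v r)=-r\Omega^{-2}T_{vv}$, $\partial_u m=2r^2\Omega^{-2}(T_{uv}\partial_u r-T_{uu}\partial_v r)$, $\partial_v m=2r^2\Omega^{-2}(T_{uv}\partial_v r-T_{vv}\partial_u r)$, with $m=\frac r2(1+4\Omega^{-2}\partial_u r\partial_v r)$. Define $\mathcal{R}=\{\partial_v r>0,\partial_u r<0\}$, $\mathcal{T}=\{\partial_v r<0,\partial_u r<0\}$, $\mathcal{A}=\{\partial_v r=0,\partial_u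 r<0\}$, $r_+=\sup_{\mathcal{C}_{out}}r$, $m_+=\sup_{\mathcal{C}_{out}}m$, $\mathcal{W}(\delta)=\{(u,v)\in\mathcal{G}(u_0,v_0):r\ge r_+-\delta\}$. Assumptions: (I) $T_{uu},T_{uv},T_{vv}\ge0$; (II) $J^-(\mathcal{G}(u_0,v_0))\subset\mathcal{G}(u_0,v_0)$; (III) $r\le r_+<\infty$ on $\mathcal{C}_{out}$; (IV) $0\le m\le m_+<\infty$ on $\mathcal{C}_{out}$; (V) $\partial_u r<0$ on $\mathcal{C}_{out}$; (VI) $\partial_v r>0$ on $\mathcal{C}_{out}$; (VII) (closures in $K(u_0,v_0)$) if $p\in\overline{\mathcal{R}}$, $q\in\overline{\mathcal{R}}\cap I^-(p)$, $J^-(p)\cap J^+(q)\setminus\{p\}\subset\mathcal{R}\cup\mathcal{A}$, then $p\in\mathcal{R}\cup\mathcal{A}$. A subset of $\mathcal{A}$ is asymptotic to the event horizon if $i^+=(0,\infty)$ is a limit point of it in $\overline{K}(u_0,v_0)$. *)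

(* Stdlib reals + Coquelicot.  Points of R^2 are pairs p = (u, v) : R * R,
   p.1 = u, p.2 = v (double null coordinates). *)
From Stdlib Require Import Reals List.
From Coquelicot Require Import Coquelicot.
Open Scope R_scope.

Definition pt := (R * R)%type.

Inductive dir := Du | Dv.

Fixpoint pder (l : list dir) (f : R -> R -> R) : R -> R -> R :=
  match l with
  | nil => f
  | Du :: l' => fun u v => Derive (fun x => pder l' f x v) u
  | Dv :: l' => fun u v => Derive (fun y => pder l' f u y) v
  end.

Definition smooth_on (U : pt -> Prop) (f : R -> R -> R) : Prop :=
  forall (l : list dir) (p : pt), U p ->
    ex_derive (fun x => pder l f x (snd p)) (fst p) /\
    ex_derive (fun y => pder l f (fst p) y) (snd p) /\
    continuous (fun q : pt => pder l f (fst q) (snd q)) p.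

Definition du (f : R -> R -> R) (u v : R) : R := Derive (fun x => f x v) u.
Definition dv (f : R -> R -> R) (u v : R) : R := Derive (fun y => f u y) v.

Definition Kset (u1 v1 : R) (p : pt) : Prop :=
  0 <= fst p <= u1 /\ v1 <= snd p.

(* causal / chronological relations in K(u0,v0) (conformally Minkowski,
   u and v increasing to the future) *)
Definition Jminus (u0 v0 : R) (p : pt) (q : pt) : Prop :=
  Kset u0 v0 q /\ fst q <= fst p /\ snd q <= snd p.
Definition Jplus (u0 v0 : R) (p : pt) (q : pt) : Prop :=
  Kset u0 v0 q /\ fst p <= fst q /\ snd p <= snd q.
Definition Iminus (u0 v0 : R) (p : pt) (q : pt) : Prop :=
  Kset u0 v0 q /\ fst q < fst p /\ snd q < snd p.

Definition Cin (u0 v0 : R) (p : pt) : Prop := 0 <= fst p <= u0 /\ snd p = v0.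
Definition Cout (v0 : R) (p : pt) : Prop := fst p = 0 /\ v0 <= snd p.

Definition rel_open_in_K (u0 v0 : R) (G : pt -> Prop) : Prop :=
  exists U : pt -> Prop, open U /\ forall p, G p <-> (U p /\ Kset u0 v0 p).

Definition bounded2 (S : pt -> Prop) : Prop :=
  exists M, forall p, S p -> Rabs (fst p) <= M /\ Rabs (snd p) <= M.

Definition compact2 (S : pt -> Prop) : Prop := closed S /\ bounded2 S.

(* global hyperbolicity (G is trivially strongly causal, being conformal to a
   subset of Minkowski space): causal diamonds J^+(p) /\ J^-(q) are compact *)
Definition glob_hyp (u0 v0 : R) (G : pt -> Prop) : Prop :=
  forall p q, G p -> G q ->
    compact2 (fun x => G x /\ Jplus u0 v0 p x /\ Jminus u0 v0 q x).

Definition closureK (u0 v0 : R) (S : pt -> Prop) (p : pt) : Prop :=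
  Kset u0 v0 p /\
  forall eps, 0 < eps -> exists x, S x /\ Rabs (fst x - fst p) < eps
                                     /\ Rabs (snd x - snd p) < eps.

Definition connected2 (S : pt -> Prop) : Prop :=
  ~ exists U1 U2 : pt -> Prop, open U1 /\ open U2 /\
      (forall p, S p -> U1 p \/ U2 p) /\
      (exists p, S p /\ U1 p) /\ (exists p, S p /\ U2 p) /\
      (forall p, S p -> U1 p -> U2 p -> False).

(* (ustar, oo) in the boundary {v = oo} of Kbar(u0,v0) is a limit point of S *)
Definition limit_pt_at_infinity (S : pt -> Prop) (ustar : R) : Prop :=
  forall eps V, 0 < eps -> exists p, S p /\ V < snd p /\ Rabs (fst p - ustar) < eps.

Definition terminates_at (S : pt -> Prop) (ustar : R) : Prop :=
  limit_pt_at_infinity S ustar /\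
  forall u', limit_pt_at_infinity S u' -> u' = ustar.

(* asymptotic to the event horizon: i^+ = (0, oo) is a limit point *)
Definition asymptotic_to_EH (S : pt -> Prop) : Prop := limit_pt_at_infinity S 0.

Definition hawking_mass (Om r : R -> R -> R) (u v : R) : R :=
  r u v / 2 * (1 + 4 / (Om u v) ^ 2 * du r u v * dv r u v).

Definition regR (G : pt -> Prop) (r : R -> R -> R) (p : pt) : Prop :=
  G p /\ dv r (fst p) (snd p) > 0 /\ du r (fst p) (snd p) < 0.
Definition regT (G : pt -> Prop) (r : R -> R -> R) (p : pt) : Prop :=
  G p /\ dv r (fst p) (snd p) < 0 /\ du r (fst p) (snd p) < 0.
Definition regA (G : pt -> Prop) (r : R -> R -> R) (p : pt) : Prop :=
  G p /\ dv r (fst p) (snd p) = 0 /\ du r (fst p) (snd p) < 0.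

Definition regW (G : pt -> Prop) (r : R -> R -> R) (rplus delta : R) (p : pt) : Prop :=
  G p /\ r (fst p) (snd p) >= rplus - delta.

Definition setup (u0 v0 : R) (G : pt -> Prop) (Om r Tuu Tuv Tvv : R -> R -> R) : Prop :=
  0 < u0 /\ 0 < v0 /\
  (forall p, G p -> Kset u0 v0 p) /\
  glob_hyp u0 v0 G /\
  rel_open_in_K u0 v0 G /\
  (forall p, Cin u0 v0 p \/ Cout v0 p -> G p) /\
  (exists U : pt -> Prop, open U /\ (forall p, G p -> U p) /\
     smooth_on U Om /\ smooth_on U r /\ smooth_on U Tuu /\
     smooth_on U Tuv /\ smooth_on U Tvv) /\
  (forall p, G p -> 0 < Om (fst p) (snd p)) /\
  (forall p, G p -> 0 <= r (fst p) (snd p)) /\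
  (forall p, Cin u0 v0 p \/ Cout v0 p -> 0 < r (fst p) (snd p)) /\
  (forall u v, G (u, v) ->
     du (fun a b => / (Om a b) ^ 2 * du r a b) u v
       = - r u v * / (Om u v) ^ 2 * Tuu u v) /\
  (forall u v, G (u, v) ->
     dv (fun a b => / (Om a b) ^ 2 * dv r a b) u v
       = - r u v * / (Om u v) ^ 2 * Tvv u v) /\
  (forall u v, G (u, v) ->
     du (hawking_mass Om r) u v
       = 2 * (r u v) ^ 2 / (Om u v) ^ 2 *
           (Tuv u v * du r u v - Tuu u v * dv r u v)) /\
  (forall u v, G (u, v) ->
     dv (hawking_mass Om r) u v
       = 2 * (r u v) ^ 2 / (Om u v) ^ 2 *
           (Tuv u v * dv r u v - Tvv u v * du r u v)).

From Stdlib Require Import Reals Lra Psatz Classical.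
From Coquelicot Require Import Coquelicot.
Open Scope R_scope.

(* On A /\ W(delta), condition (A) and the mass equation force
   du (Om^-2 dv r) < 0.  Along each line v = const, Om^-2 dv r is positive on
   the event horizon and r decreases in u (Raychaudhuri), so inside W it has at
   most one zero, crossed transversally: A /\ W is a graph u = c(v).  Raychaudhuri
   in v makes c nonincreasing, transversality makes it continuous, and (VII)
   keeps the part of R to the left of the curve inside G, so c is defined for
   all later v.  A continuous graph over a half-line is connected, a monotone one
   has the single future endpoint (inf c, oo), and if inf c > 0 every point to
   the left of the curve lies in W /\ R. *)

Lemma is_lub_approx (E : R -> Prop) (s y : R) :
  is_lub E s -> y < s -> exists x, E x /\ y < x.
Proof.
  intros [_ Hleast] Hy. apply NNPP. intro Hno.
  enough (s <= y) by lra.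
  apply Hleast. intros x Hx. apply Rnot_lt_le. intro Hyx. apply Hno. now exists x.
Qed.

Lemma nonincreasing_of_derive_nonpos (f : R -> R) (a b : R) : a <= b ->
  (forall x, a <= x <= b -> exists d, is_derive f x d /\ d <= 0) -> f b <= f a.
Proof.
  intros Hab Hd.
  destruct (Req_dec a b) as [<-|Hne]; [lra|].
  assert (Hex : forall x, a <= x <= b -> ex_derive f x).
  { intros x Hx. destruct (Hd x Hx) as [d [Hfd _]]. now exists d. }
  destruct (MVT_gen f a b (Derive f)) as [c [Hc Heq]];
    rewrite ?Rmin_left, ?Rmax_right in * by lra.
  - intros x Hx. apply Derive_correct, Hex. lra.
  - intros x Hx. apply continuity_pt_filterlim, (@ex_derive_continuous R_AbsRing R_NormedModule), Hex, Hx.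
  - destruct (Hd c) as [d [Hfd Hdn]]; [lra|].
    rewrite (is_derive_unique _ _ _ Hfd) in Heq. nra.
Qed.

Lemma nondecreasing_of_derive_nonneg (f : R -> R) (a b : R) : a <= b ->
  (forall x, a <= x <= b -> exists d, is_derive f x d /\ 0 <= d) -> f a <= f b.
Proof.
  intros Hab Hd.
  enough (- f b <= - f a) by lra.
  apply (nonincreasing_of_derive_nonpos (fun x => - f x)); [lra|].
  intros x Hx. destruct (Hd x Hx) as [d [Hfd Hdp]].
  exists (- d). split; [apply (is_derive_opp f x d Hfd)|lra].
Qed.

Lemma continuous_pos_near (f : R -> R) (x : R) : continuous f x -> 0 < f x ->
  exists eps, 0 < eps /\ forall y, Rabs (y - x) < eps -> 0 < f y.
Proof.
  intros Hc Hpos.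
  destruct (Hc _ (open_gt 0 (f x) Hpos)) as [eps Heps].
  exists eps. split; [apply cond_pos|]. intros y Hy. now apply Heps.
Qed.

Lemma continuous_neg_near (f : R -> R) (x : R) : continuous f x -> f x < 0 ->
  exists eps, 0 < eps /\ forall y, Rabs (y - x) < eps -> f y < 0.
Proof.
  intros Hc Hneg.
  destruct (Hc _ (open_lt 0 (f x) Hneg)) as [eps Heps].
  exists eps. split; [apply cond_pos|]. intros y Hy. now apply Heps.
Qed.

Lemma derive_neg_crossing (f : R -> R) (c d : R) : is_derive f c d -> d < 0 ->
  exists eps, 0 < eps /\ (forall x, c < x < c + eps -> f x < f c) /\
                         (forall x, c - eps < x < c -> f c < f x).
Proof.
  intros Hd Hneg. apply is_derive_Reals in Hd.
  destruct (Hd (- d / 2)) as [eps Heps]; [lra|].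
  assert (Hquot : forall x, x <> c -> Rabs (x - c) < eps -> (f x - f c) / (x - c) < 0).
  { intros x Hx Hxc.
    specialize (Heps (x - c) ltac:(lra) Hxc). replace (c + (x - c)) with x in Heps by ring.
    apply Rabs_def2 in Heps. lra. }
  exists eps. split; [apply cond_pos|]. split; intros x Hx.
  - specialize (Hquot x ltac:(lra) ltac:(rewrite Rabs_pos_eq; lra)).
    apply Rnot_le_lt. intro Hle.
    enough (0 <= (f x - f c) / (x - c)) by lra.
    apply Rdiv_le_0_compat; lra.
  - specialize (Hquot x ltac:(lra) ltac:(rewrite Rabs_left; lra)).
    apply Rnot_le_lt. intro Hle.
    enough (0 <= (f x - f c) / (x - c)) by lra.
    replace ((f x - f c) / (x - c)) with ((f c - f x) / (c - x)) by (field; lra).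
    apply Rdiv_le_0_compat; lra.
Qed.

Lemma real_induction (P : R -> Prop) (b : R) :
  P b ->
  (forall V, b < V -> (forall v, b <= v < V -> P v) -> P V) ->
  (forall v, b <= v -> P v -> exists eta, 0 < eta /\ forall v', v <= v' < v + eta -> P v') ->
  forall v, b <= v -> P v.
Proof.
  intros Hb Hclosed Hopen v1 Hv1. apply NNPP. intro Hnot.
  set (E := fun x => b <= x /\ forall v, b <= v <= x -> P v).
  assert (Hbound : forall x, E x -> x <= v1).
  { intros x [Hx HP]. apply Rnot_lt_le. intro Hlt. apply Hnot, HP. lra. }
  destruct (completeness E) as [s Hs].
  { exists v1. exact Hbound. }
  { exists b. split; [lra|]. intros v Hv. now replace v with b by lra. }
  assert (Hbs : b <= s).
  { apply Hs. split; [lra|]. intros v Hv. now replace v with b by lra. }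
  assert (Hbefore : forall v, b <= v < s -> P v).
  { intros v Hv. destruct (is_lub_approx E s v Hs (proj2 Hv)) as [x [[_ HP] Hvx]].
    apply HP. lra. }
  assert (HPs : P s).
  { destruct (Req_dec b s) as [<-|Hne]; [exact Hb|]. apply Hclosed; [lra|exact Hbefore]. }
  destruct (Hopen s Hbs HPs) as [eta [Heta Hafter]].
  enough (s + eta / 2 <= s) by lra.
  apply Hs. split; [lra|]. intros v Hv.
  destruct (Rlt_le_dec v s); [apply Hbefore|apply Hafter]; lra.
Qed.

Section Downcrossings.

Variables (f : R -> R) (a b : R).
Hypothesis f_cont : forall x, a <= x <= b -> continuous f x.
Hypothesis f_downcrossing : forall x, a <= x <= b -> f x = 0 ->
  exists d, is_derive f x d /\ d < 0.

Lemma neg_after_zero (z : R) : a <= z <= b -> f z = 0 -> forall x, z < x <= b -> f x < 0.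
Proof.
  intros Hz Hfz.
  enough (H : forall x, z <= x -> x <= z \/ b < x \/ f x < 0).
  { intros x Hx. destruct (H x) as [?|[?|?]]; lra. }
  apply real_induction; [lra| |].
  - intros V HzV Hbefore.
    destruct (Rle_or_lt V b) as [HVb|]; [|tauto]. right; right.
    assert (Hneg_before : forall x, z < x < V -> f x < 0).
    { intros x Hx. destruct (Hbefore x) as [?|[?|?]]; lra. }
    destruct (Rlt_or_le (f V) 0) as [Hlt|Hge]; [exact Hlt|exfalso].
    assert (Hpos_before : exists e, 0 < e /\ forall x, V - e < x < V -> 0 < f x).
    { destruct Hge as [Hgt|HV0].
      - destruct (continuous_pos_near f V (f_cont V ltac:(lra)) Hgt) as [e [He Hnear]].
        exists e. split; [exact He|]. intros x Hx. apply Hnear. rewrite Rabs_left; lra.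
      - destruct (f_downcrossing V ltac:(lra) (eq_sym HV0)) as [d [Hd Hdneg]].
        destruct (derive_neg_crossing f V d Hd Hdneg) as [e [He [_ Hleft]]].
        exists e. split; [exact He|]. intros x Hx. rewrite HV0. now apply Hleft. }
    destruct Hpos_before as [e [He Hpos]].
    set (x := Rmax (V - e / 2) ((z + V) / 2)).
    assert (V - e / 2 <= x) by apply Rmax_l. assert ((z + V) / 2 <= x) by apply Rmax_r.
    assert (x < V) by (apply Rmax_lub_lt; lra).
    specialize (Hpos x ltac:(lra)). specialize (Hneg_before x ltac:(lra)). lra.
  - intros v Hzv [Hvz|[Hbv|Hneg]].
    + replace v with z in * by lra.
      destruct (f_downcrossing z ltac:(lra) Hfz) as [d [Hd Hdneg]].
      destruct (derive_neg_crossing f z d Hd Hdneg) as [e [He [Hright _]]].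
      exists e. split; [exact He|]. intros v' Hv'.
      destruct (Req_dec v' z) as [->|]; [now left|].
      destruct (Rlt_or_le b v'); [now right; left|]. right; right.
      rewrite <- Hfz. apply Hright. lra.
    + exists 1. split; [lra|]. intros v' Hv'. right; left; lra.
    + destruct (Rlt_or_le b v) as [|Hvb].
      { exists 1. split; [lra|]. intros v' Hv'. right; left; lra. }
      destruct (continuous_neg_near f v (f_cont v ltac:(lra)) Hneg) as [e [He Hnear]].
      exists e. split; [exact He|]. intros v' Hv'.
      destruct (Rlt_or_le b v'); [now right; left|]. right; right.
      apply Hnear. rewrite Rabs_pos_eq; lra.
Qed.

Lemma pos_before_zero : 0 < f a -> f b = 0 -> forall x, a <= x < b -> 0 < f x.
Proof.
  intros Ha Hb x Hx. apply Rnot_le_lt. intro Hfx.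
  assert (Hzero : exists z, a <= z <= x /\ f z = 0).
  { destruct (Req_dec (f x) 0) as [Hx0|Hx0]; [now exists x; split; [lra|]|].
    destruct (Ranalysis5.IVT_interv (fun y => - f y) a x) as [z [Hz Hfz]].
    - intros y Hy. apply continuity_pt_filterlim, (continuous_opp f), f_cont. lra.
    - destruct (Req_dec a x) as [->|]; lra.
    - lra.
    - lra.
    - exists z. split; [exact Hz|lra]. }
  destruct Hzero as [z [Hz Hfz]].
  enough (f b < 0) by lra.
  apply (neg_after_zero z); lra.
Qed.

End Downcrossings.

(* A set [S] of points (u, v), viewed as the graph u = c(v) of a function of v. *)
Definition single_valued (S : pt -> Prop) : Prop :=
  forall u1 u2 v, S (u1, v) -> S (u2, v) -> u1 = u2.

Definition future_complete (S : pt -> Prop) : Prop :=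
  forall u v v', S (u, v) -> v <= v' -> exists u', S (u', v').

Definition graph_antitone (S : pt -> Prop) : Prop :=
  forall u1 v1 u2 v2, S (u1, v1) -> S (u2, v2) -> v1 <= v2 -> u2 <= u1.

Definition graph_continuous (S : pt -> Prop) : Prop :=
  forall c v eps, S (c, v) -> 0 < eps -> exists d, 0 < d /\
    forall u' v', Rabs (v' - v) < d -> S (u', v') -> Rabs (u' - c) < eps.

Section Graphs.

Variable S : pt -> Prop.
Hypothesis S_single : single_valued S.
Hypothesis S_future : future_complete S.

Lemma graph_open_cover_propagates (U1 U2 : pt -> Prop) (x1 y1 : R) :
  graph_continuous S -> open U1 -> open U2 ->
  (forall p, S p -> U1 p \/ U2 p) -> (forall p, S p -> U1 p -> U2 p -> False) ->
  S (x1, y1) -> U1 (x1, y1) -> forall v, y1 <= v -> forall u, S (u, v) -> U1 (u, v).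
Proof.
  intros S_cont HO1 HO2 Hcover Hdisj HS1 HU1.
  apply (real_induction (fun v => forall u, S (u, v) -> U1 (u, v))).
  - intros u HS. now rewrite (S_single u x1 y1 HS HS1).
  - intros V HyV Hbefore c HSc.
    destruct (Hcover _ HSc) as [|HU2]; [assumption|exfalso].
    destruct (HO2 _ HU2) as [eps Heps].
    destruct (S_cont c V eps HSc (cond_pos eps)) as [d [Hd Hnear]].
    set (m := Rmin d eps).
    assert (0 < m) by (apply Rmin_glb_lt; [lra|apply cond_pos]).
    assert (m <= d) by apply Rmin_l. assert (m <= eps) by apply Rmin_r.
    set (v := Rmax (V - m / 2) y1).
    assert (V - m / 2 <= v) by apply Rmax_l. assert (y1 <= v) by apply Rmax_r.
    assert (v < V) by (apply Rmax_lub_lt; lra).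
    destruct (S_future x1 y1 v HS1 ltac:(lra)) as [u HSu].
    assert (Hv : Rabs (v - V) < m) by (rewrite Rabs_left; lra).
    apply (Hdisj (u, v) HSu); [apply Hbefore; [lra|exact HSu]|].
    apply Heps. split; [apply (Hnear u v); [lra|exact HSu]|].
    change (Rabs (v - V) < eps). lra.
  - intros v Hyv HP.
    destruct (S_future x1 y1 v HS1 Hyv) as [c HSc].
    destruct (HO1 _ (HP c HSc)) as [eps Heps].
    destruct (S_cont c v eps HSc (cond_pos eps)) as [d [Hd Hnear]].
    exists (Rmin d eps). split; [apply Rmin_glb_lt; [lra|apply cond_pos]|].
    intros v' Hv' u HSu.
    assert (Rmin d eps <= d) by apply Rmin_l. assert (Rmin d eps <= eps) by apply Rmin_r.
    assert (Hvv : Rabs (v' - v) < Rmin d eps) by (rewrite Rabs_pos_eq; lra).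
    apply Heps. split; [apply (Hnear u v'); [lra|exact HSu]|].
    change (Rabs (v' - v) < eps). lra.
Qed.

Lemma connected2_continuous_graph : graph_continuous S -> connected2 S.
Proof.
  intros S_cont [U1 [U2 [HO1 [HO2 [Hcover [[[x1 y1] [HS1 HU1]] [[[x2 y2] [HS2 HU2]] Hdisj]]]]]]].
  destruct (Rle_or_lt y1 y2).
  - apply (Hdisj (x2, y2)); [exact HS2| |exact HU2].
    now apply (graph_open_cover_propagates U1 U2 x1 y1).
  - apply (Hdisj (x1, y1)); [exact HS1|exact HU1|].
    apply (graph_open_cover_propagates U2 U1 x2 y2); try assumption; [| |lra].
    + intros p Hp. now apply or_comm, Hcover.
    + intros p Hp H2 H1. exact (Hdisj p Hp H1 H2).
Qed.

Lemma antitone_graph_terminates (a0 b0 : R) :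
  graph_antitone S -> (forall u v, S (u, v) -> 0 <= u) -> S (a0, b0) ->
  exists us, 0 <= us <= a0 /\ (forall u v, S (u, v) -> us <= u) /\ terminates_at S us.
Proof.
  intros S_anti S_nonneg HS0.
  set (E := fun x => exists u v, S (u, v) /\ x = - u).
  destruct (completeness E) as [M HM].
  { exists 0. intros x [u [v [HSu ->]]]. specialize (S_nonneg u v HSu). lra. }
  { exists (- a0). now exists a0, b0. }
  exists (- M).
  assert (Hinf : forall u v, S (u, v) -> - M <= u).
  { intros u v HSu. enough (- u <= M) by lra. apply HM. now exists u, v. }
  assert (Happrox : forall eps, 0 < eps -> exists u v, S (u, v) /\ u < - M + eps).
  { intros eps He.
    destruct (is_lub_approx E M (M - eps) HM ltac:(lra)) as [x [[u [v [HSu ->]]] Hx]].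
    exists u, v. split; [exact HSu|lra]. }
  assert (HM0 : M <= 0).
  { apply HM. intros x [u [v [HSu ->]]]. specialize (S_nonneg u v HSu). lra. }
  assert (Hinf0 := Hinf a0 b0 HS0).
  split; [lra|]. split; [exact Hinf|].
  assert (Hlim : limit_pt_at_infinity S (- M)).
  { intros eps V He. destruct (Happrox eps He) as [u [v [HSu Hu]]].
    destruct (S_future u v (Rmax (V + 1) v) HSu (Rmax_r _ _)) as [c HSc].
    exists (c, Rmax (V + 1) v). split; [exact HSc|]. simpl. split.
    - assert (V + 1 <= Rmax (V + 1) v) by apply Rmax_l. lra.
    - assert (- M <= c) by now apply (Hinf c (Rmax (V + 1) v)).
      assert (c <= u) by (apply (S_anti u v c (Rmax (V + 1) v)); [assumption..|apply Rmax_r]).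
      rewrite Rabs_pos_eq; lra. }
  split; [exact Hlim|].
  intros u' Hu'. destruct (Rtotal_order u' (- M)) as [Hlt|[Heq|Hgt]]; [exfalso|exact Heq|exfalso].
  - destruct (Hu' (- M - u') 0 ltac:(lra)) as [[p1 p2] [HSp [_ Hp]]].
    specialize (Hinf p1 p2 HSp). simpl in Hp. apply Rabs_def2 in Hp. lra.
  - destruct (Happrox ((u' + M) / 2) ltac:(lra)) as [u1 [v1 [HS1 Hu1]]].
    destruct (Hu' ((u' + M) / 2) v1 ltac:(lra)) as [[p1 p2] [HSp [Hp2 Hp]]].
    simpl in Hp, Hp2. apply Rabs_def2 in Hp.
    assert (p1 <= u1) by (apply (S_anti u1 v1 p1 p2); [assumption..|lra]). lra.
Qed.

End Graphs.

Section ApparentHorizon.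

Variables (u0 v0 : R) (G : pt -> Prop) (Om r Tuu Tuv Tvv : R -> R -> R)
  (rplus delta : R) (U0 : pt -> Prop).

Hypothesis G_K : forall p, G p -> Kset u0 v0 p.
Hypothesis G_rel_open : rel_open_in_K u0 v0 G.
Hypothesis G_past_closed : forall p x, G p -> Jminus u0 v0 p x -> G x.
Hypothesis G_horizon : forall v, v0 <= v -> G (0, v).
Hypothesis G_U0 : forall p, G p -> U0 p.
Hypothesis Om_smooth : smooth_on U0 Om.
Hypothesis r_smooth : smooth_on U0 r.
Hypothesis Om_pos : forall p, G p -> 0 < Om (fst p) (snd p).
Hypothesis r_nonneg : forall p, G p -> 0 <= r (fst p) (snd p).
Hypothesis T_nonneg : forall p, G p ->
  0 <= Tuu (fst p) (snd p) /\ 0 <= Tuv (fst p) (snd p) /\ 0 <= Tvv (fst p) (snd p).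
Hypothesis raychaudhuri_u : forall u v, G (u, v) ->
  du (fun a b => / (Om a b) ^ 2 * du r a b) u v = - r u v * / (Om u v) ^ 2 * Tuu u v.
Hypothesis raychaudhuri_v : forall u v, G (u, v) ->
  dv (fun a b => / (Om a b) ^ 2 * dv r a b) u v = - r u v * / (Om u v) ^ 2 * Tvv u v.
Hypothesis mass_u : forall u v, G (u, v) ->
  du (hawking_mass Om r) u v
    = 2 * (r u v) ^ 2 / (Om u v) ^ 2 * (Tuv u v * du r u v - Tuu u v * dv r u v).
Hypothesis horizon_du_r : forall v, v0 <= v -> du r 0 v < 0.
Hypothesis horizon_dv_r : forall v, v0 <= v -> dv r 0 v > 0.
Hypothesis condition_A : forall p, regA G r p -> regW G r rplus delta p ->
  Tuv (fst p) (snd p) / (Om (fst p) (snd p)) ^ 2 < 1 / (4 * (r (fst p) (snd p)) ^ 2).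
Hypothesis causal_VII : forall p q,
  closureK u0 v0 (regR G r) p -> closureK u0 v0 (regR G r) q -> Iminus u0 v0 p q ->
  (forall x, Jminus u0 v0 p x -> Jplus u0 v0 q x -> x <> p -> regR G r x \/ regA G r x) ->
  regR G r p \/ regA G r p.

Definition rv_Om2 (u v : R) : R := / (Om u v) ^ 2 * dv r u v.

Definition AW (p : pt) : Prop := regA G r p /\ regW G r rplus delta p.

Lemma G_Kset u v : G (u, v) -> 0 <= u <= u0 /\ v0 <= v.
Proof. intro Hg. exact (G_K _ Hg). Qed.

Lemma G_past u v u' v' : G (u, v) -> 0 <= u' <= u -> v0 <= v' <= v -> G (u', v').
Proof.
  intros Hg Hu Hv. apply (G_past_closed (u, v)); [exact Hg|].
  destruct (G_Kset u v Hg). repeat split; simpl; lra.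
Qed.

Lemma G_open_near u v : G (u, v) -> exists eps, 0 < eps /\ forall x y,
  Rabs (x - u) < eps -> Rabs (y - v) < eps -> Kset u0 v0 (x, y) -> G (x, y).
Proof.
  intro Hg. destruct G_rel_open as [U [HU HGU]].
  destruct (HU _ (proj1 (proj1 (HGU _) Hg))) as [eps Heps].
  exists eps. split; [apply cond_pos|].
  intros x y Hx Hy HK. apply HGU. split; [apply Heps; split; assumption|exact HK].
Qed.

Lemma Om2_inv_pos u v : G (u, v) -> 0 < / (Om u v) ^ 2.
Proof. intro Hg. pose proof (Om_pos _ Hg) as HO. simpl in HO. apply Rinv_0_lt_compat. nra. Qed.

Lemma smooth_ex_derive_u f l u v : smooth_on U0 f -> G (u, v) ->
  ex_derive (fun x => pder l f x v) u.
Proof. intros Hs Hg. exact (proj1 (Hs l (u, v) (G_U0 _ Hg))). Qed.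

Lemma smooth_ex_derive_v f l u v : smooth_on U0 f -> G (u, v) ->
  ex_derive (fun y => pder l f u y) v.
Proof. intros Hs Hg. exact (proj1 (proj2 (Hs l (u, v) (G_U0 _ Hg)))). Qed.

Lemma ex_derive_rv_Om2_u u v : G (u, v) -> ex_derive (fun x => rv_Om2 x v) u.
Proof.
  intro Hg. unfold rv_Om2.
  assert (HOm := smooth_ex_derive_u Om nil u v Om_smooth Hg).
  assert (Hrv := smooth_ex_derive_u r (Dv :: nil) u v r_smooth Hg).
  pose proof (Om_pos _ Hg) as HO. simpl in HOm, Hrv, HO.
  auto_derive. repeat split; auto; intro; nra.
Qed.

Lemma ex_derive_rv_Om2_v u v : G (u, v) -> ex_derive (fun y => rv_Om2 u y) v.
Proof.
  intro Hg. unfold rv_Om2.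
  assert (HOm := smooth_ex_derive_v Om nil u v Om_smooth Hg).
  assert (Hrv := smooth_ex_derive_v r (Dv :: nil) u v r_smooth Hg).
  pose proof (Om_pos _ Hg) as HO. simpl in HOm, Hrv, HO.
  auto_derive. repeat split; auto; intro; nra.
Qed.

Lemma continuous_rv_Om2_u u v : G (u, v) -> continuous (fun x => rv_Om2 x v) u.
Proof.
  intro Hg. apply (@ex_derive_continuous R_AbsRing R_NormedModule), ex_derive_rv_Om2_u, Hg.
Qed.

Lemma continuous_rv_Om2_v u v : G (u, v) -> continuous (fun y => rv_Om2 u y) v.
Proof.
  intro Hg. apply (@ex_derive_continuous R_AbsRing R_NormedModule), ex_derive_rv_Om2_v, Hg.
Qed.

(* Raychaudhuri in u: [Om^-2 du r] is nonincreasing in u and negative on the horizon. *)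
Lemma du_r_neg u v : G (u, v) -> du r u v < 0.
Proof.
  intro Hg. destruct (G_Kset u v Hg) as [Hu Hv].
  set (zeta := fun x => / (Om x v) ^ 2 * du r x v).
  assert (Hzeta : zeta u <= zeta 0).
  { apply (nonincreasing_of_derive_nonpos zeta 0 u); [lra|]. intros x Hx.
    assert (Hgx : G (x, v)) by (apply (G_past u v _ _ Hg); lra).
    exists (Derive zeta x). split.
    - apply Derive_correct. unfold zeta.
      assert (HOm := smooth_ex_derive_u Om nil x v Om_smooth Hgx).
      assert (Hru := smooth_ex_derive_u r (Du :: nil) x v r_smooth Hgx).
      pose proof (Om_pos _ Hgx) as HO. simpl in HOm, Hru, HO.
      auto_derive. repeat split; auto; intro; nra.
    - change (du (fun a b => / (Om a b) ^ 2 * du r a b) x v <= 0).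
      rewrite (raychaudhuri_u x v Hgx).
      pose proof (r_nonneg _ Hgx) as Hr. pose proof (T_nonneg _ Hgx) as [HT _]. simpl in Hr, HT.
      assert (Hinv := Om2_inv_pos x v Hgx).
      enough (0 <= r x v * / Om x v ^ 2 * Tuu x v) by lra.
      apply Rmult_le_pos; [apply Rmult_le_pos|]; lra. }
  assert (Hzeta0 : zeta 0 < 0).
  { pose proof (horizon_du_r v Hv). assert (Hinv := Om2_inv_pos 0 v (G_horizon v Hv)).
    unfold zeta. nra. }
  assert (Hinv := Om2_inv_pos u v Hg). unfold zeta in *. nra.
Qed.

Lemma rv_Om2_nonincreasing_v u v1 v2 : G (u, v2) -> v0 <= v1 <= v2 ->
  rv_Om2 u v2 <= rv_Om2 u v1.
Proof.
  intros Hg Hv. apply (nonincreasing_of_derive_nonpos (fun y => rv_Om2 u y) v1 v2); [lra|]. intros y Hy.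
  assert (Hgy : G (u, y)) by (destruct (G_Kset u v2 Hg); apply (G_past u v2 _ _ Hg); lra).
  exists (Derive (fun y => rv_Om2 u y) y). split.
  - apply Derive_correct, ex_derive_rv_Om2_v, Hgy.
  - change (dv (fun a b => / (Om a b) ^ 2 * dv r a b) u y <= 0).
    rewrite (raychaudhuri_v u y Hgy).
    pose proof (r_nonneg _ Hgy) as Hr. pose proof (T_nonneg _ Hgy) as [_ [_ HT]]. simpl in Hr, HT.
    assert (Hinv := Om2_inv_pos u y Hgy).
    enough (0 <= r u y * / Om u y ^ 2 * Tvv u y) by lra.
    apply Rmult_le_pos; [apply Rmult_le_pos|]; lra.
Qed.

Lemma r_nonincreasing_u u1 u2 v : G (u2, v) -> 0 <= u1 <= u2 -> r u2 v <= r u1 v.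
Proof.
  intros Hg Hu. destruct (G_Kset u2 v Hg).
  apply (nonincreasing_of_derive_nonpos (fun x => r x v)); [lra|]. intros x Hx.
  assert (Hgx : G (x, v)) by (apply (G_past u2 v _ _ Hg); lra).
  exists (du r x v). split.
  - apply Derive_correct, (smooth_ex_derive_u r nil x v r_smooth Hgx).
  - apply Rlt_le, du_r_neg, Hgx.
Qed.

Lemma r_nondecreasing_v u v1 v2 : G (u, v2) -> v0 <= v1 <= v2 -> 0 <= rv_Om2 u v2 ->
  r u v1 <= r u v2.
Proof.
  intros Hg Hv Hw. destruct (G_Kset u v2 Hg).
  apply (nondecreasing_of_derive_nonneg (fun y => r u y)); [lra|]. intros y Hy.
  assert (Hgy : G (u, y)) by (apply (G_past u v2 _ _ Hg); lra).
  exists (dv r u y). split.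
  - apply Derive_correct, (smooth_ex_derive_v r nil u y r_smooth Hgy).
  - assert (Hwy : 0 <= rv_Om2 u y).
    { enough (rv_Om2 u v2 <= rv_Om2 u y) by lra. apply rv_Om2_nonincreasing_v; [exact Hg|lra]. }
    assert (Hinv := Om2_inv_pos u y Hgy). unfold rv_Om2 in Hwy. nra.
Qed.

Lemma regR_of_rv_Om2_pos u v : G (u, v) -> 0 < rv_Om2 u v -> regR G r (u, v).
Proof.
  intros Hg Hw. assert (Hinv := Om2_inv_pos u v Hg). unfold rv_Om2 in Hw.
  split; [exact Hg|]. simpl. split; [nra|apply du_r_neg, Hg].
Qed.

Lemma regA_of_rv_Om2_zero u v : G (u, v) -> rv_Om2 u v = 0 -> regA G r (u, v).
Proof.
  intros Hg Hw. assert (Hinv := Om2_inv_pos u v Hg). unfold rv_Om2 in Hw.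
  split; [exact Hg|]. simpl. split; [|apply du_r_neg, Hg].
  destruct (Rmult_integral _ _ Hw); lra.
Qed.

Lemma rv_Om2_horizon_pos v : v0 <= v -> 0 < rv_Om2 0 v.
Proof.
  intro Hv. pose proof (horizon_dv_r v Hv).
  assert (Hinv := Om2_inv_pos 0 v (G_horizon v Hv)). unfold rv_Om2. nra.
Qed.

Lemma AW_intro u v : G (u, v) -> rv_Om2 u v = 0 -> r u v >= rplus - delta -> AW (u, v).
Proof. intros Hg Hw Hr. split; [now apply regA_of_rv_Om2_zero|now split]. Qed.

Lemma AW_G u v : AW (u, v) -> G (u, v).
Proof. now intros [[Hg _] _]. Qed.

Lemma AW_r u v : AW (u, v) -> r u v >= rplus - delta.
Proof. now intros [_ [_ Hr]]. Qed.

Lemma AW_rv_Om2 u v : AW (u, v) -> rv_Om2 u v = 0.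
Proof. intros [[_ [Hrv _]] _]. unfold rv_Om2. simpl in Hrv. rewrite Hrv. ring. Qed.

Lemma AW_pos_u u v : AW (u, v) -> 0 < u.
Proof.
  intro HA. destruct (G_Kset u v (AW_G u v HA)) as [[[Hu|<-] _] Hv]; [exact Hu|].
  pose proof (rv_Om2_horizon_pos v Hv). rewrite (AW_rv_Om2 0 v HA) in *. lra.
Qed.

Lemma du_hawking_mass_where_dv_r_zero u v : G (u, v) -> dv r u v = 0 ->
  du (hawking_mass Om r) u v = du r u v * (/ 2 + 2 * r u v * Derive (fun x => rv_Om2 x v) u).
Proof.
  intros Hg Hrv.
  assert (Hr := smooth_ex_derive_u r nil u v r_smooth Hg).
  assert (Hru := smooth_ex_derive_u r (Du :: nil) u v r_smooth Hg).
  assert (Hw := ex_derive_rv_Om2_u u v Hg).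
  simpl in Hr, Hru.
  assert (Hw0 : rv_Om2 u v = 0) by (unfold rv_Om2; rewrite Hrv; ring).
  unfold du at 1.
  rewrite (Derive_ext _ (fun x => r x v / 2 + 2 * r x v * du r x v * rv_Om2 x v))
    by (intro x; unfold hawking_mass, rv_Om2; lra).
  apply is_derive_unique. auto_derive.
  - repeat split; assumption.
  - rewrite Hw0. unfold du. lra.
Qed.

(* Where condition (A) enters: at a point of A /\ W, the mass equation and
   [m = r/2 + 2 r (du r) rv_Om2] force [2 r du rv_Om2 = 2 r^2 Tuv / Om^2 - 1/2 < 0]. *)
Lemma du_rv_Om2_neg_on_AW u v : AW (u, v) ->
  exists d, is_derive (fun x => rv_Om2 x v) u d /\ d < 0.
Proof.
  intros [[Hg [Hrv Hru]] HW]. simpl in Hrv, Hru.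
  exists (Derive (fun x => rv_Om2 x v) u).
  split; [apply Derive_correct, ex_derive_rv_Om2_u, Hg|].
  assert (Hmass := mass_u u v Hg).
  rewrite (du_hawking_mass_where_dv_r_zero u v Hg Hrv), Hrv in Hmass.
  set (D := Derive (fun x => rv_Om2 x v) u) in *.
  assert (Hq := condition_A (u, v) (conj Hg (conj Hrv Hru)) HW). cbn [fst snd] in Hq.
  set (q := Tuv u v / Om u v ^ 2) in Hq.
  assert (Hkey : / 2 + 2 * r u v * D = 2 * r u v ^ 2 * q).
  { apply (Rmult_eq_reg_l (du r u v)); [|lra].
    rewrite Hmass. unfold q, Rdiv. ring. }
  pose proof (r_nonneg _ Hg) as Hr. simpl in Hr.
  assert (Hrpos : 0 < r u v).
  { destruct Hr as [|Hr0]; [assumption|]. rewrite <- Hr0 in Hkey. lra. }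
  assert (Hsmall : 2 * r u v ^ 2 * q < / 2).
  { assert (H4 : 0 < 4 * r u v ^ 2) by nra.
    apply (Rmult_lt_compat_l (4 * r u v ^ 2)) in Hq; [|exact H4].
    replace (4 * r u v ^ 2 * (1 / (4 * r u v ^ 2))) with 1 in Hq by (field; lra).
    lra. }
  assert (Hneg : r u v * D < 0) by lra.
  nra.
Qed.

Lemma AW_downcrossing u v : G (u, v) -> rv_Om2 u v = 0 -> r u v >= rplus - delta ->
  exists d, is_derive (fun x => rv_Om2 x v) u d /\ d < 0.
Proof. intros Hg Hw Hr. apply du_rv_Om2_neg_on_AW, AW_intro; assumption. Qed.

Lemma rv_Om2_neg_right_of_AW u1 u2 v : AW (u1, v) -> u1 < u2 -> G (u2, v) ->
  r u2 v >= rplus - delta -> rv_Om2 u2 v < 0.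
Proof.
  intros HAW Hu Hg Hr. destruct (G_Kset u1 v (AW_G u1 v HAW)) as [Hu1 Hv].
  assert (Hgx : forall x, u1 <= x <= u2 -> G (x, v)) by (intros x Hx; apply (G_past u2 v _ _ Hg); lra).
  assert (Hcont : forall x, u1 <= x <= u2 -> continuous (fun x => rv_Om2 x v) x).
  { intros x Hx. apply continuous_rv_Om2_u, Hgx, Hx. }
  assert (Hdown : forall x, u1 <= x <= u2 -> rv_Om2 x v = 0 ->
            exists d, is_derive (fun x => rv_Om2 x v) x d /\ d < 0).
  { intros x Hx Hw. apply AW_downcrossing; [apply Hgx, Hx|exact Hw|].
    assert (r u2 v <= r x v) by (apply r_nonincreasing_u; [exact Hg|lra]). lra. }
  apply (neg_after_zero _ u1 u2 Hcont Hdown u1); [lra|apply AW_rv_Om2, HAW|lra].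
Qed.

Lemma rv_Om2_pos_left_of_AW c v u : AW (c, v) -> 0 <= u < c -> 0 < rv_Om2 u v.
Proof.
  intros HAW Hu. assert (Hg := AW_G c v HAW). destruct (G_Kset c v Hg) as [Hc Hv].
  assert (Hgx : forall x, 0 <= x <= c -> G (x, v)) by (intros x Hx; apply (G_past c v _ _ Hg); lra).
  assert (Hcont : forall x, 0 <= x <= c -> continuous (fun x => rv_Om2 x v) x).
  { intros x Hx. apply continuous_rv_Om2_u, Hgx, Hx. }
  assert (Hdown : forall x, 0 <= x <= c -> rv_Om2 x v = 0 ->
            exists d, is_derive (fun x => rv_Om2 x v) x d /\ d < 0).
  { intros x Hx Hw. apply AW_downcrossing; [apply Hgx, Hx|exact Hw|].
    assert (r c v <= r x v) by (apply r_nonincreasing_u; [exact Hg|lra]).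
    pose proof (AW_r c v HAW). lra. }
  apply (pos_before_zero _ 0 c Hcont Hdown);
    [apply rv_Om2_horizon_pos, Hv|apply AW_rv_Om2, HAW|lra].
Qed.

Lemma AW_single_valued : single_valued AW.
Proof.
  intros u1 u2 v H1 H2.
  destruct (Rtotal_order u1 u2) as [Hlt|[Heq|Hgt]]; [exfalso|exact Heq|exfalso].
  - pose proof (rv_Om2_neg_right_of_AW u1 u2 v H1 Hlt (AW_G u2 v H2) (AW_r u2 v H2)).
    rewrite (AW_rv_Om2 u2 v H2) in *. lra.
  - pose proof (rv_Om2_neg_right_of_AW u2 u1 v H2 Hgt (AW_G u1 v H1) (AW_r u1 v H1)).
    rewrite (AW_rv_Om2 u1 v H1) in *. lra.
Qed.

Lemma rv_Om2_zero_upto u v : G (u, v) -> rv_Om2 u v <= 0 ->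
  exists c, 0 < c <= u /\ rv_Om2 c v = 0.
Proof.
  intros Hg Hw. destruct (G_Kset u v Hg) as [Hu Hv].
  pose proof (rv_Om2_horizon_pos v Hv) as H0.
  destruct (Req_dec (rv_Om2 u v) 0) as [Hz|Hnz].
  { exists u. split; [|exact Hz]. destruct Hu as [[Hu|<-] _]; lra. }
  destruct (Ranalysis5.IVT_interv (fun x => - rv_Om2 x v) 0 u) as [c [Hc Hwc]].
  - intros x Hx. apply continuity_pt_filterlim, (continuous_opp (fun x => rv_Om2 x v)).
    apply continuous_rv_Om2_u, (G_past u v _ _ Hg); lra.
  - destruct Hu as [[Hu|<-] _]; lra.
  - lra.
  - lra.
  - exists c. split; [|lra]. destruct Hc as [[Hc|<-] Hcu]; [lra|]. lra.
Qed.

Lemma R_segment_edge c V : 0 < c -> (forall u, 0 <= u < c -> G (u, V) /\ 0 < rv_Om2 u V) ->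
  forall x2, x2 < V -> (exists u, G (u, x2) /\ rv_Om2 u x2 <= 0) ->
  G (c, x2) /\ 0 <= rv_Om2 c x2.
Proof.
  intros Hc Hseg x2 Hx2 [u [Hgu Hwu]].
  destruct (G_Kset u x2 Hgu) as [Hu Hv2].
  assert (Hcu : c <= u).
  { apply Rnot_lt_le. intro Huc. destruct (Hseg u ltac:(lra)) as [HgV HwV].
    assert (rv_Om2 u V <= rv_Om2 u x2) by (apply rv_Om2_nonincreasing_v; [exact HgV|lra]).
    lra. }
  assert (Hgc : G (c, x2)) by (apply (G_past u x2 _ _ Hgu); lra).
  split; [exact Hgc|]. apply Rnot_lt_le. intro Hneg.
  destruct (continuous_neg_near _ c (continuous_rv_Om2_u c x2 Hgc) Hneg) as [e [He Hnear]].
  set (y := Rmax (c - e / 2) (c / 2)).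
  assert (c - e / 2 <= y) by apply Rmax_l. assert (c / 2 <= y) by apply Rmax_r.
  assert (y < c) by (apply Rmax_lub_lt; lra).
  destruct (Hseg y ltac:(lra)) as [HgV HwV].
  assert (rv_Om2 y V <= rv_Om2 y x2) by (apply rv_Om2_nonincreasing_v; [exact HgV|lra]).
  specialize (Hnear y ltac:(rewrite Rabs_left; lra)). lra.
Qed.

(* (VII) with p = (c, V) and q = (c/2, (b+V)/2): the diamond between them,
   minus p, lies in R \/ A. *)
Lemma G_at_end_of_R_segment c b V : 0 < c <= u0 -> b < V ->
  (forall u, 0 <= u < c -> G (u, V) /\ 0 < rv_Om2 u V) ->
  (forall v, b <= v < V -> exists u, G (u, v) /\ rv_Om2 u v <= 0) -> G (c, V).
Proof.
  intros Hc HbV Hseg Hnon.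
  assert (Hb : v0 <= b).
  { destruct (Hnon b ltac:(lra)) as [u [Hgu _]]. exact (proj2 (G_Kset u b Hgu)). }
  assert (HR_below : forall x1 x2, 0 <= x1 < c -> v0 <= x2 <= V -> regR G r (x1, x2)).
  { intros x1 x2 Hx1 Hx2. destruct (Hseg x1 Hx1) as [HgV HwV].
    apply regR_of_rv_Om2_pos; [apply (G_past x1 V _ _ HgV); lra|].
    enough (rv_Om2 x1 V <= rv_Om2 x1 x2) by lra.
    apply rv_Om2_nonincreasing_v; [exact HgV|lra]. }
  set (q := (c / 2, (b + V) / 2)).
  assert (Hp : regR G r (c, V) \/ regA G r (c, V)).
  { apply (causal_VII (c, V) q).
    - split; [split; simpl; lra|]. intros eps Heps.
      set (m := Rmin eps c).
      assert (0 < m) by (apply Rmin_glb_lt; lra).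
      assert (m <= eps) by apply Rmin_l. assert (m <= c) by apply Rmin_r.
      exists (c - m / 2, V). split; [apply HR_below; lra|]. simpl.
      replace (V - V) with 0 by ring. rewrite Rabs_R0, Rabs_left; lra.
    - split; [unfold q; split; simpl; lra|]. intros eps Heps.
      exists q. split; [apply HR_below; lra|].
      replace (fst q - fst q) with 0 by ring. replace (snd q - snd q) with 0 by ring.
      rewrite Rabs_R0. lra.
    - unfold q. split; [split; simpl; lra|]. simpl. lra.
    - intros [x1 x2] [[HK1 HK2] [Hx1 Hx2]] [_ [Hx1' Hx2']] Hne. simpl in *.
      destruct (Rlt_or_le x1 c) as [Hlt|Hge]; [left; apply HR_below; lra|].
      replace x1 with c in * by lra.
      assert (Hx2V : x2 < V).
      { destruct Hx2 as [|Heq]; [assumption|]. exfalso. apply Hne. now rewrite Heq. }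
      destruct (R_segment_edge c V ltac:(lra) Hseg x2 Hx2V (Hnon x2 ltac:(lra)))
        as [Hgc [Hw|Hw]].
      + left. now apply regR_of_rv_Om2_pos.
      + right. now apply regA_of_rv_Om2_zero. }
  destruct Hp as [[Hg _]|[Hg _]]; exact Hg.
Qed.

Definition nonR_point_upto (a v : R) : Prop :=
  exists u, 0 <= u <= a /\ G (u, v) /\ rv_Om2 u v <= 0.

Lemma nonR_point_upto_open a v : nonR_point_upto a v ->
  exists eta, 0 < eta /\ forall v', v <= v' < v + eta -> nonR_point_upto a v'.
Proof.
  intros [u [Hu [Hg Hw]]]. destruct (G_Kset u v Hg) as [HuK Hv].
  destruct (G_open_near u v Hg) as [e [He Hnear]].
  exists e. split; [exact He|]. intros v' Hv'.
  assert (Hg' : G (u, v')).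
  { apply Hnear; [replace (u - u) with 0 by ring; rewrite Rabs_R0; lra| |split; simpl; lra].
    rewrite Rabs_pos_eq; lra. }
  exists u. split; [exact Hu|]. split; [exact Hg'|].
  enough (rv_Om2 u v' <= rv_Om2 u v) by lra.
  apply rv_Om2_nonincreasing_v; [exact Hg'|lra].
Qed.

Lemma nonR_point_upto_closed a b V : AW (a, b) -> b < V ->
  (forall v, b <= v < V -> nonR_point_upto a v) -> nonR_point_upto a V.
Proof.
  intros HAW HbV Hbefore. apply NNPP. intro Hnot.
  assert (Hga := AW_G a b HAW). destruct (G_Kset a b Hga) as [Ha Hb].
  assert (Hpos : forall u, 0 <= u <= a -> G (u, V) -> 0 < rv_Om2 u V).
  { intros u Hu Hg. apply Rnot_le_lt. intro Hw. apply Hnot. now exists u. }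
  set (E := fun u => 0 <= u <= a /\ G (u, V)).
  assert (E0 : E 0) by (split; [lra|apply G_horizon; lra]).
  destruct (completeness E) as [c Hc].
  { exists a. intros x [Hx _]. lra. }
  { now exists 0. }
  assert (Hc0 : 0 <= c) by (apply Hc, E0).
  assert (Hca : c <= a) by (apply Hc; intros x [Hx _]; lra).
  assert (Hseg : forall u, 0 <= u < c -> G (u, V) /\ 0 < rv_Om2 u V).
  { intros u Hu. destruct (is_lub_approx E c u Hc (proj2 Hu)) as [x [[Hx Hgx] Hux]].
    assert (Hgu : G (u, V)) by (apply (G_past x V _ _ Hgx); lra).
    split; [exact Hgu|apply Hpos; [lra|exact Hgu]]. }
  assert (Hgc : G (c, V)).
  { destruct Hc0 as [Hc0|<-]; [|apply G_horizon; lra].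
    apply (G_at_end_of_R_segment c b V); [lra|lra|exact Hseg|].
    intros v Hv. destruct (Hbefore v Hv) as [u [_ [Hg Hw]]]. now exists u. }
  destruct (Req_dec c a) as [->|Hne].
  - pose proof (Hpos a ltac:(lra) Hgc).
    assert (rv_Om2 a V <= rv_Om2 a b) by (apply rv_Om2_nonincreasing_v; [exact Hgc|lra]).
    rewrite (AW_rv_Om2 a b HAW) in *. lra.
  - destruct (G_open_near c V Hgc) as [e [He Hnear]].
    set (x := Rmin (c + e / 2) a).
    assert (x <= c + e / 2) by apply Rmin_l. assert (x <= a) by apply Rmin_r.
    assert (c < x) by (apply Rmin_glb_lt; lra).
    enough (x <= c) by lra.
    apply Hc. split; [lra|]. apply Hnear; [rewrite Rabs_pos_eq; lra| |split; simpl; lra].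
    replace (V - V) with 0 by ring. rewrite Rabs_R0. lra.
Qed.

Lemma AW_future_within a b v : AW (a, b) -> b <= v -> exists c, 0 < c <= a /\ AW (c, v).
Proof.
  intros HAW Hbv.
  assert (Hga := AW_G a b HAW). destruct (G_Kset a b Hga) as [Ha Hb].
  assert (Hnon : nonR_point_upto a v).
  { revert v Hbv. apply real_induction.
    - exists a. split; [lra|]. split; [exact Hga|]. rewrite (AW_rv_Om2 a b HAW). lra.
    - intros V HbV Hbefore. exact (nonR_point_upto_closed a b V HAW HbV Hbefore).
    - intros v _ Hv. exact (nonR_point_upto_open a v Hv). }
  destruct Hnon as [u [Hu [Hg Hw]]].
  destruct (rv_Om2_zero_upto u v Hg Hw) as [c [Hc Hwc]].
  assert (Hgc : G (c, v)) by (apply (G_past u v _ _ Hg); lra).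
  exists c. split; [lra|]. apply AW_intro; [exact Hgc|exact Hwc|].
  assert (r c b <= r c v) by (apply r_nondecreasing_v; [exact Hgc|lra|lra]).
  assert (r a b <= r c b) by (apply r_nonincreasing_u; [exact Hga|lra]).
  pose proof (AW_r a b HAW). lra.
Qed.

Lemma AW_future_complete : future_complete AW.
Proof.
  intros a b v HAW Hbv. destruct (AW_future_within a b v HAW Hbv) as [c [_ Hc]]. now exists c.
Qed.

Lemma AW_antitone : graph_antitone AW.
Proof.
  intros u1 v1 u2 v2 H1 H2 Hv.
  destruct (AW_future_within u1 v1 v2 H1 Hv) as [c [Hc HAc]].
  rewrite (AW_single_valued u2 c v2 H2 HAc). lra.
Qed.

Lemma AW_lower_bound_near_future c v eps : AW (c, v) -> 0 < eps ->
  exists d, 0 < d /\ forall u' v', v <= v' < v + d -> AW (u', v') -> c - eps < u'.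
Proof.
  intros HAW Heps. assert (Hg := AW_G c v HAW). assert (Hc := AW_pos_u c v HAW).
  destruct (G_Kset c v Hg) as [HcK Hv].
  set (x := c - Rmin eps c / 2).
  assert (0 < Rmin eps c) by (apply Rmin_glb_lt; lra).
  assert (Rmin eps c <= eps) by apply Rmin_l. assert (Rmin eps c <= c) by apply Rmin_r.
  assert (Hgx : G (x, v)) by (apply (G_past c v _ _ Hg); unfold x; lra).
  assert (Hwx : 0 < rv_Om2 x v) by (apply (rv_Om2_pos_left_of_AW c v x HAW); unfold x; lra).
  destruct (continuous_pos_near _ v (continuous_rv_Om2_v x v Hgx) Hwx) as [e1 [He1 Hpos]].
  destruct (G_open_near x v Hgx) as [e2 [He2 HG]].
  exists (Rmin e1 e2). split; [now apply Rmin_glb_lt|].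
  intros u' v' Hv' HAW'. apply Rnot_le_lt. intro Hu'.
  assert (Rmin e1 e2 <= e1) by apply Rmin_l. assert (Rmin e1 e2 <= e2) by apply Rmin_r.
  assert (Hgx' : G (x, v')).
  { apply HG; [replace (x - x) with 0 by ring; rewrite Rabs_R0; lra| |].
    - rewrite Rabs_pos_eq; lra.
    - split; simpl; unfold x; lra. }
  assert (Hwx' : 0 < rv_Om2 x v') by (apply Hpos; rewrite Rabs_pos_eq; lra).
  assert (Hr : r x v' >= rplus - delta).
  { assert (r x v <= r x v') by (apply r_nondecreasing_v; [exact Hgx'|lra|lra]).
    assert (r c v <= r x v) by (apply r_nonincreasing_u; [exact Hg|unfold x; lra]).
    pose proof (AW_r c v HAW). lra. }
  pose proof (rv_Om2_neg_right_of_AW u' x v' HAW' ltac:(unfold x; lra) Hgx' Hr). lra.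
Qed.

Lemma AW_upper_bound_near_past c v eps : AW (c, v) -> 0 < eps ->
  exists d, 0 < d /\ forall u' v', v - d < v' <= v -> AW (u', v') -> u' < c + eps.
Proof.
  intros HAW Heps. assert (Hg := AW_G c v HAW). destruct (G_Kset c v Hg) as [HcK Hv].
  destruct (du_rv_Om2_neg_on_AW c v HAW) as [d3 [Hd3 Hd3neg]].
  destruct (derive_neg_crossing _ c d3 Hd3 Hd3neg) as [e3 [He3 [Hright _]]].
  rewrite (AW_rv_Om2 c v HAW) in Hright.
  destruct (G_open_near c v Hg) as [e4 [He4 HG]].
  set (k := Rmin (Rmin e3 e4) eps / 2).
  assert (0 < Rmin (Rmin e3 e4) eps) by (repeat apply Rmin_glb_lt; lra).
  assert (Rmin (Rmin e3 e4) eps <= Rmin e3 e4) by apply Rmin_l.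
  assert (Rmin (Rmin e3 e4) eps <= eps) by apply Rmin_r.
  assert (Rmin e3 e4 <= e3) by apply Rmin_l. assert (Rmin e3 e4 <= e4) by apply Rmin_r.
  destruct (Rlt_or_le u0 (c + k)) as [Hbeyond|Hinside].
  { exists 1. split; [lra|]. intros u' v' _ HAW'.
    destruct (G_Kset u' v' (AW_G u' v' HAW')). unfold k in *. lra. }
  assert (Hgy : G (c + k, v)).
  { apply HG; [rewrite Rabs_pos_eq; unfold k; lra| |split; simpl; unfold k in *; lra].
    replace (v - v) with 0 by ring. rewrite Rabs_R0. lra. }
  assert (Hwy : rv_Om2 (c + k) v < 0) by (apply Hright; unfold k; lra).
  destruct (continuous_neg_near _ v (continuous_rv_Om2_v (c + k) v Hgy) Hwy) as [e [He Hneg]].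
  exists e. split; [exact He|]. intros u' v' Hv' HAW'. apply Rnot_le_lt. intro Hu'.
  assert (0 < rv_Om2 (c + k) v')
    by (apply (rv_Om2_pos_left_of_AW u' v' (c + k) HAW'); unfold k in *; lra).
  assert (rv_Om2 (c + k) v' < 0).
  { apply Hneg. destruct (Req_dec v' v) as [->|]; [replace (v - v) with 0 by ring; rewrite Rabs_R0; lra|].
    rewrite Rabs_left; lra. }
  lra.
Qed.

Lemma AW_continuous : graph_continuous AW.
Proof.
  intros c v eps HAW Heps.
  destruct (AW_lower_bound_near_future c v eps HAW Heps) as [d1 [Hd1 Hlow]].
  destruct (AW_upper_bound_near_past c v eps HAW Heps) as [d2 [Hd2 Hup]].
  exists (Rmin d1 d2). split; [now apply Rmin_glb_lt|].
  intros u' v' Hv' HAW'.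
  assert (Rmin d1 d2 <= d1) by apply Rmin_l. assert (Rmin d1 d2 <= d2) by apply Rmin_r.
  apply Rabs_def2 in Hv'. apply Rabs_def1.
  - destruct (Rle_or_lt v v') as [Hvv|Hvv].
    + pose proof (AW_antitone c v u' v' HAW HAW' Hvv). lra.
    + pose proof (Hup u' v' ltac:(lra) HAW'). lra.
  - destruct (Rle_or_lt v v') as [Hvv|Hvv].
    + pose proof (Hlow u' v' ltac:(lra) HAW'). lra.
    + pose proof (AW_antitone u' v' c v HAW' HAW ltac:(lra)). lra.
Qed.

Lemma W_R_rectangle a0 b0 u1 : AW (a0, b0) -> 0 < u1 -> (forall u v, AW (u, v) -> u1 < u) ->
  forall p, Kset u1 b0 p -> regW G r rplus delta p /\ regR G r p.
Proof.
  intros HAW Hu1 Hbelow [x y] [[Hx1 Hx2] Hy]. simpl in *.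
  destruct (AW_future_within a0 b0 y HAW Hy) as [c [_ HAc]].
  pose proof (Hbelow c y HAc) as Hc.
  assert (Hgc := AW_G c y HAc). destruct (G_Kset c y Hgc) as [_ Hvy].
  assert (Hg : G (x, y)) by (apply (G_past c y _ _ Hgc); lra).
  split.
  - split; [exact Hg|]. simpl.
    assert (r c y <= r x y) by (apply r_nonincreasing_u; [exact Hgc|lra]).
    pose proof (AW_r c y HAc). lra.
  - apply regR_of_rv_Om2_pos; [exact Hg|]. apply (rv_Om2_pos_left_of_AW c y x HAc). lra.
Qed.

Lemma AW_connected : connected2 AW.
Proof.
  exact (connected2_continuous_graph AW AW_single_valued AW_future_complete AW_continuous).
Qed.

Lemma AW_terminates a0 b0 : AW (a0, b0) ->
  (terminates_at AW 0 /\ asymptotic_to_EH AW) \/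
  ((exists ustar, 0 < ustar <= u0 /\ terminates_at AW ustar) /\
   exists u1 v1, 0 < u1 <= u0 /\ v0 <= v1 /\
     forall p, Kset u1 v1 p -> regW G r rplus delta p /\ regR G r p).
Proof.
  intro HAW. destruct (G_Kset a0 b0 (AW_G a0 b0 HAW)) as [Ha0 Hb0].
  assert (Hnonneg : forall u v, AW (u, v) -> 0 <= u) by (intros u v H; apply Rlt_le, (AW_pos_u u v H)).
  destruct (antitone_graph_terminates AW AW_future_complete a0 b0 AW_antitone Hnonneg HAW)
    as [us [Hus [Hinf Hterm]]].
  destruct (Req_dec us 0) as [->|Hne]; [left; split; [exact Hterm|exact (proj1 Hterm)]|right].
  split; [exists us; split; [lra|exact Hterm]|].
  exists (us / 2), b0. split; [lra|]. split; [lra|].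
  apply (W_R_rectangle a0 b0); [exact HAW|lra|].
  intros u v H. pose proof (Hinf u v H). lra.
Qed.

End ApparentHorizon.

Theorem lemma1
  (u0 v0 : R) (G : pt -> Prop) (Om r Tuu Tuv Tvv : R -> R -> R)
  (rplus mplus delta : R)
  (Hsetup : setup u0 v0 G Om r Tuu Tuv Tvv)
  (* (I) *)
  (HI : forall p, G p ->
          0 <= Tuu (fst p) (snd p) /\ 0 <= Tuv (fst p) (snd p) /\
          0 <= Tvv (fst p) (snd p))
  (* (II) J^-(G) is contained in G *)
  (HII : forall p x, G p -> Jminus u0 v0 p x -> G x)
  (* (III) r_+ = sup_{C_out} r < oo *)
  (HIII : is_lub (fun x => exists v, v0 <= v /\ x = r 0 v) rplus)
  (* (IV) 0 <= m on C_out, m_+ = sup_{C_out} m < oo *)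
  (HIV0 : forall v, v0 <= v -> 0 <= hawking_mass Om r 0 v)
  (HIV : is_lub (fun x => exists v, v0 <= v /\ x = hawking_mass Om r 0 v) mplus)
  (* (V) and (VI) *)
  (HV : forall v, v0 <= v -> du r 0 v < 0)
  (HVI : forall v, v0 <= v -> dv r 0 v > 0)
  (* (VII) *)
  (HVII : forall p q,
      closureK u0 v0 (regR G r) p ->
      closureK u0 v0 (regR G r) q -> Iminus u0 v0 p q ->
      (forall x, Jminus u0 v0 p x -> Jplus u0 v0 q x -> x <> p ->
         regR G r x \/ regA G r x) ->
      regR G r p \/ regA G r p)
  (Hdelta : 0 < delta)
  (* condition (A) on A /\ W(delta) *)
  (HA : forall p, regA G r p -> regW G r rplus delta p ->
          Tuv (fst p) (snd p) / (Om (fst p) (snd p)) ^ 2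
            < 1 / (4 * (r (fst p) (snd p)) ^ 2))
  (Hne : exists p, regA G r p /\ regW G r rplus delta p) :
  connected2 (fun p => regA G r p /\ regW G r rplus delta p) /\
  ( (terminates_at (fun p => regA G r p /\ regW G r rplus delta p) 0 /\
     asymptotic_to_EH (fun p => regA G r p /\ regW G r rplus delta p))
    \/
    ((exists ustar, 0 < ustar <= u0 /\
        terminates_at (fun p => regA G r p /\ regW G r rplus delta p) ustar) /\
     exists u1 v1, 0 < u1 <= u0 /\ v0 <= v1 /\
       forall p, Kset u1 v1 p -> regW G r rplus delta p /\ regR G r p) ).
Proof.
  destruct Hsetup as (_ & _ & HK & _ & Hopen & Hcio & [U [_ [HU [HsOm [Hsr _]]]]] &
    HOm & Hr0 & _ & Eu & Ev & Em & _).
  assert (Hhorizon : forall v, v0 <= v -> G (0, v)).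
  { intros v Hv. apply Hcio. right. split; simpl; [reflexivity|exact Hv]. }
  destruct Hne as [[a b] Hab].
  split.
  - exact (AW_connected u0 v0 G Om r Tuu Tuv Tvv rplus delta U HK Hopen HII Hhorizon HU
             HsOm Hsr HOm Hr0 HI Eu Ev Em HV HVI HA HVII).
  - exact (AW_terminates u0 v0 G Om r Tuu Tuv Tvv rplus delta U HK Hopen HII Hhorizon HU
             HsOm Hsr HOm Hr0 HI Eu Ev Em HV HVI HA HVII a b Hab).
Qed.
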